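(* Let $\alpha$ be Diophantine, $\theta\in\mathbb{R}$ and $\epsilon_0>0$. There exists $c=c(\alpha,\epsilon_0)>0$ such that, with $0=n_0,n_1,n_2,\dots$ the $\epsilon_0$-resonances associated to $\alpha$ and $\theta$ ordered so that $|n_0|<|n_1|\le|n_2|\le\cdots$ (with the convention $|n_{j+1}|=\infty$ if $n_j$ is the last resonance), one has for every $j$ $$|n_{j+1}|\ge c\,\|2\theta-n_j\alpha\|_{\mathbb{R}/\mathbb{Z}}^{-c}\ge c\,e^{c\epsilon_0|n_j|}.$$
   Context: An irrational $\alpha$ is Diophantine if $\sup_n\ln q_{n+1}/\ln q_n<\infty$, where $q_n$ are the denominators of its continued fraction approximants. $\|\cdot\|_{\mathbb{R}/\mathbb{Z}}$ is the distance to the nearest integer. Given $\alpha,\theta,\epsilon_0$, an integer $k$ is an $\epsilon_0$-resonance if $\|2\theta-k\alpha\|_{\mathbb{R}/\mathbb{Z}}\le e^{-|k|\epsilon_0}$ and $\|2\theta-k\alpha\|_{\mathbb{R}/\mathbb{Z}}=\min_{|j|\le|k|}\|2\theta-j\alpha\|_{\mathbb{R}/\mathbb{Z}}$ ($0$ is always a resonance). *)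

From Stdlib Require Import Reals Lra Lia ZArith.
Open Scope R_scope.

Definition distZ (x : R) : R := Rmin (frac_part x) (1 - frac_part x).

Definition irrational (a : R) : Prop :=
  forall (p q : Z), q <> 0%Z -> a <> IZR p / IZR q.

(* Continued fraction expansion via the Gauss map:
   x_0 = frac(alpha), a_{n+1} = floor(1/x_n), x_{n+1} = frac(1/x_n),
   q_{-1} = 0, q_0 = 1, q_{n+1} = a_{n+1} q_n + q_{n-1}.
   cf_state alpha n = (x_n, q_n, q_{n-1}). *)
Fixpoint cf_state (a : R) (n : nat) : R * R * R :=
  match n with
  | O => (frac_part a, 1, 0)
  | S m =>
      let '(x, q, qp) := cf_state a m in
      (frac_part (/ x), IZR (Int_part (/ x)) * q + qp, q)
  end.

Definition cf_q (a : R) (n : nat) : R := snd (fst (cf_state a n)).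

(* Diophantine: irrational and sup_n ln q_{n+1} / ln q_n < oo
   (the sup taken over the n with q_n > 1, where the ratio is defined). *)
Definition diophantine (a : R) : Prop :=
  irrational a /\
  exists C : R, forall n : nat, 1 < cf_q a n ->
    ln (cf_q a (S n)) / ln (cf_q a n) <= C.

Definition resonance (a theta eps0 : R) (k : Z) : Prop :=
  distZ (2 * theta - IZR k * a) <= exp (- IZR (Z.abs k) * eps0) /\
  (forall j : Z, (Z.abs j <= Z.abs k)%Z ->
     distZ (2 * theta - IZR k * a) <= distZ (2 * theta - IZR j * a)).

(* Index set of an enumeration: all of nat (infinitely many resonances)
   or {0, ..., N-1} (finitely many). *)
Definition in_range (L : option nat) (j : nat) : Prop :=
  match L with None => True | Some N => (j < N)%nat end.

Definition resonance_enum (a theta eps0 : R) (L : option nat) (n : nat -> Z)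
  : Prop :=
  in_range L 0 /\ n O = 0%Z /\
  (forall j, in_range L (S j) -> in_range L j) /\
  (forall i j, in_range L i -> in_range L j -> n i = n j -> i = j) /\
  (forall j, in_range L j -> resonance a theta eps0 (n j)) /\
  (forall k, resonance a theta eps0 k -> exists j, in_range L j /\ n j = k) /\
  (forall j, in_range L (S j) -> (Z.abs (n j) <= Z.abs (n (S j)))%Z).

(* Consecutive resonances m = n_j and k = n_(j+1) satisfy |m| <= |k| and, by the
   minimality in the definition of a resonance, ||2θ - kα|| <= ||2θ - mα||; hence
   k - m is a nonzero integer with ||(k - m)α|| <= 2 ||2θ - mα||.  For Diophantine α
   the convergent denominators grow at most polynomially, q_(n+1) <= K q_n^D, which
   together with the best-approximation property of convergents gives
   ||Qα|| >= (2K|Q|^D)^(-1) for Q <> 0.  Therefore |k| >= |k - m| / 2 >= c ||2θ - mα||^(-c).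
   The second inequality is the resonance condition ||2θ - mα|| <= exp(-ε0 |m|). *)

From Stdlib Require Import Reals Lra Lia ZArith.
Open Scope R_scope.

Record cf_data : Type := CfData {
  cf_rem : R; cf_den : Z; cf_den_prev : Z; cf_num : Z; cf_num_prev : Z }.

(* The recursion of [cf_state], extended by the numerators p_n of the
   convergents, with p_(-1) = 1 and p_0 = Int_part a. *)
Fixpoint cf_data_at (a : R) (n : nat) : cf_data :=
  match n with
  | O => CfData (frac_part a) 1 0 (Int_part a) 1
  | S m =>
      let s := cf_data_at a m in
      let b := Int_part (/ cf_rem s) in
      CfData (frac_part (/ cf_rem s)) (b * cf_den s + cf_den_prev s) (cf_den s)
        (b * cf_num s + cf_num_prev s) (cf_num s)
  end.

Definition den (a : R) (n : nat) : Z := cf_den (cf_data_at a n).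
Definition num (a : R) (n : nat) : Z := cf_num (cf_data_at a n).

Lemma cf_q_den a n : cf_q a n = IZR (den a n).
Proof.
  enough (E : cf_state a n = (cf_rem (cf_data_at a n), IZR (den a n),
                              IZR (cf_den_prev (cf_data_at a n)))).
  { unfold cf_q; rewrite E; reflexivity. }
  unfold den; induction n as [|n IH]; [reflexivity|].
  simpl; rewrite IH, plus_IZR, mult_IZR; reflexivity.
Qed.

Definition cf_invariant (n : nat) (a : R) (s : cf_data) : Prop :=
  0 < cf_rem s < 1 /\ (1 <= cf_den s)%Z /\ (0 <= cf_den_prev s <= cf_den s)%Z /\
  (Z.of_nat n <= cf_den_prev s + cf_den s)%Z /\
  Z.abs (cf_den s * cf_num_prev s - cf_den_prev s * cf_num s) = 1%Z /\
  IZR (cf_den s) * a - IZR (cf_num s) =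
    - cf_rem s * (IZR (cf_den_prev s) * a - IZR (cf_num_prev s)).

Lemma Int_part_ge1 y : 1 < y -> (1 <= Int_part y)%Z.
Proof.
  intros Hy; destruct (base_Int_part y) as [H1 H2].
  assert (Hpos : 0 < IZR (Int_part y)) by lra.
  apply lt_IZR in Hpos; lia.
Qed.

Lemma cf_invariant_holds a : irrational a -> forall n, cf_invariant n a (cf_data_at a n).
Proof.
  intros Hirr n; induction n as [|n IH]; unfold cf_invariant in *; simpl.
  - destruct (base_fp a) as [F0 F1].
    assert (frac_part a <> 0).
    { intro H0; apply (Hirr (Int_part a) 1%Z); [lia|].
      unfold frac_part in H0; field_simplify; lra. }
    repeat split; try lia; try lra.
    unfold frac_part; lra.
  - set (s := cf_data_at a n) in *; set (b := Int_part (/ cf_rem s)).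
    destruct IH as (X & Q1 & QP & Qn & Det & Err).
    assert (Hb : (1 <= b)%Z).
    { apply Int_part_ge1; rewrite <- Rinv_1; apply Rinv_lt_contravar; lra. }
    assert (Err' : IZR (b * cf_den s + cf_den_prev s) * a - IZR (b * cf_num s + cf_num_prev s)
                   = - frac_part (/ cf_rem s) * (IZR (cf_den s) * a - IZR (cf_num s))).
    { unfold frac_part; fold b; rewrite !plus_IZR, !mult_IZR.
      replace ((IZR b * IZR (cf_den s) + IZR (cf_den_prev s)) * a
               - (IZR b * IZR (cf_num s) + IZR (cf_num_prev s)))
        with (IZR b * (IZR (cf_den s) * a - IZR (cf_num s))
              + (IZR (cf_den_prev s) * a - IZR (cf_num_prev s))) by ring.
      rewrite Err; field; lra. }
    destruct (base_fp (/ cf_rem s)) as [F0 F1].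
    (* a vanishing remainder would make a rational *)
    assert (frac_part (/ cf_rem s) <> 0).
    { intro H0; rewrite H0 in Err'.
      apply (Hirr (b * cf_num s + cf_num_prev s)%Z (b * cf_den s + cf_den_prev s)%Z); [nia|].
      assert (IZR (b * cf_den s + cf_den_prev s) <> 0) by (apply not_0_IZR; nia).
      field_simplify_eq; [lra|assumption]. }
    repeat split; try lra; try nia.
Qed.

Lemma cf_invariant_error_ge n a s : cf_invariant n a s ->
  1 <= 2 * IZR (cf_den s) * Rabs (IZR (cf_den_prev s) * a - IZR (cf_num_prev s)).
Proof.
  intros (X & Q1 & [QP0 QP1] & _ & Det & Err).
  apply IZR_le in Q1, QP0, QP1.
  set (f := IZR (cf_den_prev s) * a - IZR (cf_num_prev s)) in *.
  assert (Hf : Rabs f * (IZR (cf_den s) + IZR (cf_den_prev s) * cf_rem s) = 1).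
  { rewrite <- (Rabs_right (IZR (cf_den s) + _)) by nra.
    rewrite <- Rabs_mult, <- (Rabs_Ropp (_ * _)).
    replace (- (f * (IZR (cf_den s) + IZR (cf_den_prev s) * cf_rem s)))
      with (IZR (cf_den s * cf_num_prev s - cf_den_prev s * cf_num s)).
    { rewrite Rabs_Zabs, Det; reflexivity. }
    assert (Hxf : cf_rem s * f = - (IZR (cf_den s) * a - IZR (cf_num s))) by (rewrite Err; ring).
    replace (- (f * (IZR (cf_den s) + IZR (cf_den_prev s) * cf_rem s)))
      with (- (f * IZR (cf_den s)) - IZR (cf_den_prev s) * (cf_rem s * f)) by ring.
    rewrite Hxf, minus_IZR, !mult_IZR; unfold f; ring. }
  assert (IZR (cf_den_prev s) * cf_rem s <= IZR (cf_den s)) by nra.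
  pose proof (Rabs_pos f); nra.
Qed.

Lemma coords_opposite_signs (q qp Q u v : Z) :
  (0 <= qp <= q)%Z -> (1 <= Q < q)%Z -> Q = (u * q + v * qp)%Z ->
  v <> 0%Z /\ (u * v <= 0)%Z.
Proof.
  intros Hqp HQ ->; split.
  - intros ->; destruct (Z_lt_le_dec 0 u); nia.
  - destruct (Z_le_gt_dec (u * v) 0) as [|Huv]; [assumption|].
    destruct (Z_lt_le_dec 0 u); [assert (0 < v)%Z | assert (v < 0)%Z]; nia.
Qed.

Lemma cf_invariant_best_approx n a s : cf_invariant n a s ->
  forall Q P : Z, (1 <= Q < cf_den s)%Z ->
  Rabs (IZR (cf_den_prev s) * a - IZR (cf_num_prev s)) <= Rabs (IZR Q * a - IZR P).
Proof.
  intros (X & _ & QP & _ & Det & Err) Q P HQ.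
  set (d := (cf_den s * cf_num_prev s - cf_den_prev s * cf_num s)%Z) in Det.
  assert (Hd : (d * d = 1)%Z) by nia.
  (* coordinates of (Q, P) in the unimodular basis (q_n, p_n), (q_(n-1), p_(n-1)) *)
  set (u := (d * (Q * cf_num_prev s - P * cf_den_prev s))%Z).
  set (v := (d * (P * cf_den s - Q * cf_num s))%Z).
  assert (HQu : Q = (u * cf_den s + v * cf_den_prev s)%Z).
  { transitivity (d * d * Q)%Z; [rewrite Hd; ring|]. unfold u, v, d; ring. }
  assert (HPu : P = (u * cf_num s + v * cf_num_prev s)%Z).
  { transitivity (d * d * P)%Z; [rewrite Hd; ring|]. unfold u, v, d; ring. }
  set (f := IZR (cf_den_prev s) * a - IZR (cf_num_prev s)) in *.
  assert (HR : IZR Q * a - IZR P = f * (IZR v - IZR u * cf_rem s)).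
  { rewrite HQu, HPu, !plus_IZR, !mult_IZR.
    assert (Hxf : f * cf_rem s = - (IZR (cf_den s) * a - IZR (cf_num s))) by (rewrite Err; ring).
    replace (f * (IZR v - IZR u * cf_rem s)) with (IZR v * f - IZR u * (f * cf_rem s)) by ring.
    rewrite Hxf; unfold f; ring. }
  clearbody u v.
  destruct (coords_opposite_signs _ _ _ u v QP HQ HQu) as [Hv Huv].
  assert (Hlin : 1 <= Rabs (IZR v - IZR u * cf_rem s)).
  { destruct (Z_lt_le_dec 0 v).
    - assert (Hu : (u <= 0)%Z) by nia; assert (Hv1 : (1 <= v)%Z) by lia.
      apply IZR_le in Hu, Hv1; rewrite Rabs_right; nra.
    - assert (Hu : (0 <= u)%Z) by nia; assert (Hv1 : (v <= -1)%Z) by lia.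
      apply IZR_le in Hu, Hv1; rewrite Rabs_left; nra. }
  rewrite HR, Rabs_mult.
  pose proof (Rabs_pos f); nra.
Qed.

Section Convergents.

Variable a : R.
Hypothesis Hirr : irrational a.

Lemma convergent_error_ge n :
  1 <= 2 * IZR (den a (S n)) * Rabs (IZR (den a n) * a - IZR (num a n)).
Proof. exact (cf_invariant_error_ge _ _ _ (cf_invariant_holds a Hirr (S n))). Qed.

Lemma convergent_best_approx n (Q P : Z) : (1 <= Q < den a (S n))%Z ->
  Rabs (IZR (den a n) * a - IZR (num a n)) <= Rabs (IZR Q * a - IZR P).
Proof. exact (cf_invariant_best_approx _ _ _ (cf_invariant_holds a Hirr (S n)) Q P). Qed.

Lemma den_ge1 n : (1 <= den a n)%Z.
Proof. apply (cf_invariant_holds a Hirr n). Qed.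

Lemma den_le_S n : (den a n <= den a (S n))%Z.
Proof. apply (cf_invariant_holds a Hirr (S n)). Qed.

Lemma den_monotone m n : (m <= n)%nat -> (den a m <= den a n)%Z.
Proof.
  induction 1 as [|n _ IH]; [lia|].
  pose proof (den_le_S n); lia.
Qed.

Lemma den_unbounded n : (Z.of_nat n <= 2 * den a n)%Z.
Proof.
  destruct (cf_invariant_holds a Hirr n) as (_ & _ & QP & Hn & _); unfold den; lia.
Qed.

Lemma den_bracket (Q : Z) : (1 <= Q)%Z -> exists m, (den a m <= Q < den a (S m))%Z.
Proof.
  intros HQ.
  assert (Hbig : (Q < den a (Z.to_nat (2 * Q + 1)))%Z).
  { pose proof (den_unbounded (Z.to_nat (2 * Q + 1))); lia. }
  induction (Z.to_nat (2 * Q + 1)) as [|N IH].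
  - unfold den in Hbig; simpl in Hbig; lia.
  - destruct (Z_le_gt_dec (den a N) Q); [exists N; lia | apply IH; lia].
Qed.

End Convergents.

Lemma ln_le x y : 0 < x -> x <= y -> ln x <= ln y.
Proof.
  intros Hx Hxy; destruct (Req_dec x y) as [->|]; [lra|].
  left; apply ln_increasing; lra.
Qed.

Lemma exp_le x y : x <= y -> exp x <= exp y.
Proof.
  intros Hxy; destruct (Req_dec x y) as [->|]; [lra|].
  left; apply exp_increasing; lra.
Qed.

Lemma Rpower_1_l x : Rpower 1 x = 1.
Proof. unfold Rpower; rewrite ln_1, Rmult_0_r; apply exp_0. Qed.

Lemma diophantine_den_growth a : diophantine a -> exists K D, 1 <= K /\ 1 <= D /\
  forall m, IZR (den a (S m)) <= K * Rpower (IZR (den a m)) D.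
Proof.
  intros [Hirr [C HC]].
  set (K := IZR (den a 3)); set (D := Rmax C 1).
  assert (HK : 1 <= K) by (apply IZR_le, den_ge1, Hirr).
  exists K, D; split; [exact HK|]; split; [apply Rmax_r|]; intros m.
  set (q := IZR (den a m)); set (q' := IZR (den a (S m))).
  assert (Hq' : 1 <= q') by (apply IZR_le, den_ge1, Hirr).
  destruct (Z_lt_le_dec 1 (den a m)) as [Hgt|Hle].
  - assert (Hq : 1 < q) by (apply IZR_lt; lia).
    assert (Hlnq : 0 < ln q) by (rewrite <- ln_1; apply ln_increasing; lra).
    pose proof (HC m) as Hratio; rewrite !cf_q_den in Hratio; fold q q' in Hratio.
    specialize (Hratio Hq).
    assert (Hln : ln q' <= D * ln q).
    { apply Rle_trans with (C * ln q).
      - replace (ln q') with (ln q' / ln q * ln q) by (field; lra).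
        apply Rmult_le_compat_r; lra.
      - apply Rmult_le_compat_r; [lra | apply Rmax_l]. }
    apply exp_le in Hln; rewrite exp_ln in Hln by lra.
    pose proof (exp_pos (D * ln q)); unfold Rpower; nra.
  - assert (Hm : (m <= 2)%nat) by (pose proof (den_unbounded a Hirr m); lia).
    assert (Hq1 : q = 1) by (pose proof (den_ge1 a Hirr m); unfold q; f_equal; lia).
    rewrite Hq1, Rpower_1_l, Rmult_1_r.
    apply IZR_le, den_monotone; [exact Hirr | lia].
Qed.

Definition linear_form_bound (a K D : R) : Prop :=
  forall Q P : Z, Q <> 0%Z ->
  1 <= 2 * K * Rpower (IZR (Z.abs Q)) D * Rabs (IZR Q * a - IZR P).

Lemma den_growth_linear_form_bound a K D : irrational a -> 1 <= K -> 1 <= D ->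
  (forall m, IZR (den a (S m)) <= K * Rpower (IZR (den a m)) D) ->
  linear_form_bound a K D.
Proof.
  intros Hirr HK HD Hgrowth.
  assert (Hpos : forall Q P : Z, (1 <= Q)%Z ->
            1 <= 2 * K * Rpower (IZR Q) D * Rabs (IZR Q * a - IZR P)).
  { intros Q P HQ.
    destruct (den_bracket a Hirr Q HQ) as [m [Hlo Hhi]].
    pose proof (convergent_error_ge a Hirr m) as Herr.
    pose proof (convergent_best_approx a Hirr m Q P (conj HQ Hhi)) as Hbest.
    pose proof (Hgrowth m) as Hgrow.
    assert (Hmono : Rpower (IZR (den a m)) D <= Rpower (IZR Q) D).
    { apply Rle_Rpower_l; [lra|]; split; apply IZR_lt || apply IZR_le;
        pose proof (den_ge1 a Hirr m); lia. }
    assert (HR : 0 < Rpower (IZR Q) D) by apply exp_pos.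
    apply Rle_trans with (1 := Herr).
    apply Rle_trans with (2 * (K * Rpower (IZR Q) D) * Rabs (IZR (den a m) * a - IZR (num a m))).
    { apply Rmult_le_compat_r; [apply Rabs_pos|]; apply Rmult_le_compat_l; [lra|].
      apply Rle_trans with (1 := Hgrow); apply Rmult_le_compat_l; lra. }
    rewrite <- Rmult_assoc; apply Rmult_le_compat_l; [nra | exact Hbest]. }
  intros Q P HQ; destruct (Z_lt_le_dec 0 Q).
  - rewrite Z.abs_eq by lia; apply Hpos; lia.
  - rewrite Z.abs_neq, opp_IZR by lia.
    replace (IZR Q * a - IZR P) with (- (IZR (- Q) * a - IZR (- P))) by (rewrite !opp_IZR; ring).
    rewrite Rabs_Ropp, <- opp_IZR; apply Hpos; lia.
Qed.

Lemma diophantine_linear_form_bound a : diophantine a ->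
  exists K D, 1 <= K /\ 1 <= D /\ linear_form_bound a K D.
Proof.
  intros Hdio; destruct (diophantine_den_growth a Hdio) as (K & D & HK & HD & Hgrowth).
  exists K, D; repeat split; try assumption.
  apply den_growth_linear_form_bound; [apply Hdio | assumption..].
Qed.

(* (1/2)(4K)^(-1/D) is what the linear form bound yields; capping at 1/D lets
   d^(-1/D) dominate d^(-c) for d <= 1. *)
Definition gap_constant (K D : R) : R := Rmin (/ D) (/ 2 * Rpower (4 * K) (- / D)).

Lemma gap_constant_pos K D : 0 < K -> 0 < D -> 0 < gap_constant K D.
Proof.
  intros HK HD; apply Rmin_glb_lt; [apply Rinv_0_lt_compat; lra|].
  apply Rmult_lt_0_compat; [lra | apply exp_pos].
Qed.

Lemma gap_constant_bound K D d k : 1 <= K -> 1 <= D -> 0 < d <= 1 -> 0 < k ->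
  1 <= 4 * K * Rpower (2 * k) D * d ->
  gap_constant K D * Rpower d (- gap_constant K D) <= k.
Proof.
  intros HK HD Hd Hk Hprod; set (c := gap_constant K D).
  assert (Hc : 0 < c) by (apply gap_constant_pos; lra).
  assert (HR : 0 < Rpower (2 * k) D) by apply exp_pos.
  assert (Hlog : 0 <= ln (4 * K) + D * (ln 2 + ln k) + ln d).
  { rewrite <- ln_mult, <- ln_Rpower, <- ln_mult, <- ln_mult by nra.
    rewrite <- ln_1; apply ln_le; lra. }
  assert (Hlnc : ln c <= - ln 2 - / D * ln (4 * K)).
  { apply Rle_trans with (ln (/ 2 * Rpower (4 * K) (- / D))).
    - apply ln_le; [exact Hc | apply Rmin_r].
    - rewrite ln_mult, ln_Rinv, ln_Rpower by (lra || apply exp_pos); lra. }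
  assert (Hlnd : ln d <= 0) by (rewrite <- ln_1; apply ln_le; lra).
  assert (HcD : c <= / D) by apply Rmin_l.
  assert (Hcd : - c * ln d <= - / D * ln d) by nra.
  assert (HlogD : 0 <= / D * ln (4 * K) + ln 2 + ln k + / D * ln d).
  { replace (/ D * ln (4 * K) + ln 2 + ln k + / D * ln d)
      with (/ D * (ln (4 * K) + D * (ln 2 + ln k) + ln d)) by (field; lra).
    apply Rmult_le_pos; [apply Rlt_le, Rinv_0_lt_compat; lra | exact Hlog]. }
  assert (Hexp : ln c + - c * ln d <= ln k) by lra.
  unfold Rpower; rewrite <- (exp_ln c) at 1 by exact Hc.
  rewrite <- (exp_ln k) by exact Hk; rewrite <- exp_plus.
  apply exp_le; exact Hexp.
Qed.

Lemma distZ_bounds y : 0 <= distZ y <= 1 / 2.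
Proof.
  unfold distZ; destruct (base_fp y); unfold Rmin; destruct (Rle_dec _ _); lra.
Qed.

Lemma distZ_attained y : exists P : Z, distZ y = Rabs (y - IZR P).
Proof.
  unfold distZ; destruct (base_fp y); unfold frac_part in *.
  unfold Rmin; destruct (Rle_dec _ _).
  - exists (Int_part y); rewrite Rabs_right; lra.
  - exists (Int_part y + 1)%Z; rewrite plus_IZR, Rabs_left; lra.
Qed.

Lemma distZ_sub x y : exists P : Z, Rabs (x - y - IZR P) <= distZ x + distZ y.
Proof.
  destruct (distZ_attained x) as [Px ->], (distZ_attained y) as [Py ->].
  exists (Px - Py)%Z.
  replace (x - y - IZR (Px - Py)) with ((x - IZR Px) + - (y - IZR Py))
    by (rewrite minus_IZR; ring).
  rewrite <- (Rabs_Ropp (y - IZR Py)); apply Rabs_triang.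
Qed.

Lemma resonance_gap a K D x (m k : Z) : 1 <= K -> 1 <= D -> linear_form_bound a K D ->
  k <> m -> (Z.abs m <= Z.abs k)%Z -> distZ (x - IZR k * a) <= distZ (x - IZR m * a) ->
  0 < distZ (x - IZR m * a) /\
  gap_constant K D * Rpower (distZ (x - IZR m * a)) (- gap_constant K D)
    <= IZR (Z.abs k).
Proof.
  intros HK HD Hlin Hkm Habs Hdist.
  set (d := distZ (x - IZR m * a)) in *.
  destruct (distZ_sub (x - IZR m * a) (x - IZR k * a)) as [P HP]; fold d in HP.
  replace (x - IZR m * a - (x - IZR k * a)) with (IZR (k - m) * a)
    in HP by (rewrite minus_IZR; ring).
  assert (Hkm0 : (k - m <> 0)%Z) by lia.
  pose proof (Hlin (k - m)%Z P Hkm0) as Hb.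
  assert (Hpow : Rpower (IZR (Z.abs (k - m))) D <= Rpower (2 * IZR (Z.abs k)) D).
  { apply Rle_Rpower_l; [lra|]; rewrite <- mult_IZR; split; [apply IZR_lt | apply IZR_le]; lia. }
  assert (HR : 0 < Rpower (IZR (Z.abs (k - m))) D) by apply exp_pos.
  assert (Hprod : 1 <= 4 * K * Rpower (2 * IZR (Z.abs k)) D * d).
  { apply Rle_trans with (1 := Hb).
    replace (4 * K * Rpower (2 * IZR (Z.abs k)) D * d)
      with (2 * K * Rpower (2 * IZR (Z.abs k)) D * (2 * d)) by ring.
    apply Rmult_le_compat; [nra | apply Rabs_pos | | lra].
    apply Rmult_le_compat_l; lra. }
  pose proof (distZ_bounds (x - IZR m * a)) as Hd; fold d in Hd.
  assert (Hdpos : 0 < d).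
  { destruct (Req_dec d 0) as [Hd0|]; [rewrite Hd0, Rmult_0_r in Hprod; lra | lra]. }
  split; [exact Hdpos|].
  apply gap_constant_bound; try lra.
  apply IZR_lt; lia.
Qed.

Lemma exp_le_Rpower_opp c t d : 0 <= c -> 0 < d <= exp (- t) ->
  exp (c * t) <= Rpower d (- c).
Proof.
  intros Hc [Hd Hdt]; unfold Rpower; apply exp_le.
  assert (ln d <= - t) by (rewrite <- (ln_exp (- t)); apply ln_le; assumption).
  nra.
Qed.

Theorem lemma3p1 :
  forall alpha : R, diophantine alpha ->
  forall eps0 : R, 0 < eps0 ->
  exists c : R, 0 < c /\
  forall (theta : R) (L : option nat) (n : nat -> Z),
    resonance_enum alpha theta eps0 L n ->
    (forall j : nat, in_range L (S j) ->
       0 < distZ (2 * theta - IZR (n j) * alpha) /\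
       c * Rpower (distZ (2 * theta - IZR (n j) * alpha)) (- c)
         <= IZR (Z.abs (n (S j)))) /\
    (forall j : nat, in_range L j ->
       0 < distZ (2 * theta - IZR (n j) * alpha) ->
       c * exp (c * eps0 * IZR (Z.abs (n j)))
         <= c * Rpower (distZ (2 * theta - IZR (n j) * alpha)) (- c)).
Proof.
  intros alpha Hdio eps0 Heps.
  destruct (diophantine_linear_form_bound alpha Hdio) as (K & D & HK & HD & Hlin).
  assert (Hc : 0 < gap_constant K D) by (apply gap_constant_pos; lra).
  exists (gap_constant K D); split; [exact Hc|].
  intros theta L n (_ & _ & Hdown & Hinj & Hres & _ & Hmono); split.
  - intros j Hj.
    apply resonance_gap; try assumption.
    + intros Heq; enough (S j = j) by lia.
      exact (Hinj (S j) j Hj (Hdown j Hj) Heq).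
    + exact (Hmono j Hj).
    + apply (Hres (S j) Hj), Hmono, Hj.
  - intros j Hj Hpos; apply Rmult_le_compat_l; [lra|].
    replace (gap_constant K D * eps0 * IZR (Z.abs (n j)))
      with (gap_constant K D * (IZR (Z.abs (n j)) * eps0)) by ring.
    apply exp_le_Rpower_opp; [lra|]; split; [exact Hpos|].
    rewrite Ropp_mult_distr_l; apply (Hres j Hj).
Qed.
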